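(* For any finite interval $\Lambda\subset\mathbb Z$ and any $N\in\{0,1,\dots,N^{\max}_\Lambda\}$ there is a root tiling $R\in\mathcal R_\Lambda$ with $N_\Lambda(R)=N$. Moreover $$\frac13\le\frac{N^{\max}_\Lambda}{|\Lambda|}\le\frac13+\frac{4}{3|\Lambda|},$$ so that $\lim_{|\Lambda|\to\infty}N^{\max}_\Lambda/|\Lambda|=1/3$.
   Context: Tiles on a finite interval $\Lambda$ occupy consecutive sites and carry 0/1 words (particle contents): void $0$; monomer $100$; left boundary dimer $11000$ (allowed only as the first tile of $\Lambda$); and, allowed only as the last tile: right dimer $011$, right 1-monomer $1$, right 2-monomer $10$. A root tiling $R$ of $\Lambda$ is a tiling of $\Lambda$ by consecutive tiles consisting of voids and monomers, optionally with a left boundary dimer as first tile and optionally with one of right dimer, right 1-monomer, right 2-monomer as last tile; $\mathcal R_\Lambda$ is the set of root tilings. $N_\Lambda(R)$ is the total number of $1$'s in the concatenated particle content of $R$, and $N^{\max}_\Lambda=\max\{N_\Lambda(R):R\in\mathcal R_\Lambda\}$. *)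

From mathcomp Require Import all_boot all_order all_algebra.
Set Implicit Arguments. Unset Strict Implicit. Unset Printing Implicit Defensive.

(* Tiles and their particle contents (0/1 words, with 1 = true). *)
Inductive tile : Type :=
| Void
| Mono
| LDimer
| RDimer
| RMono1
| RMono2.

Definition content (t : tile) : seq bool :=
  match t with
  | Void => [:: false]
  | Mono => [:: true; false; false]
  | LDimer => [:: true; true; false; false; false]
  | RDimer => [:: false; true; true]
  | RMono1 => [:: true]
  | RMono2 => [:: true; false]
  end.

Definition tlen (t : tile) : nat := size (content t).

Definition is_bulk (t : tile) : bool :=
  match t with Void | Mono => true | _ => false end.

Definition is_right (t : tile) : bool :=
  match t with RDimer | RMono1 | RMono2 => true | _ => false end.

(* The finite interval Lambda = {a, a+1, ..., b} of Z (a <= b); its cardinality. *)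
Definition interval_card (a b : int) : nat := (absz (b - a)%R).+1.

(* R is a root tiling of Lambda = [a,b]: a sequence of consecutive tiles
   (placed left to right starting at a) covering Lambda exactly, consisting of
   voids and monomers, optionally preceded by a left boundary dimer and
   optionally followed by one right boundary tile. *)
Definition root_tiling (a b : int) (R : seq tile) : Prop :=
  exists (l : option tile) (M : seq tile) (r : option tile),
    [/\ R = (if l is Some t then [:: t] else [::]) ++ M
              ++ (if r is Some t then [:: t] else [::]),
        l = None \/ l = Some LDimer,
        (if r is Some t then is_right t else true),
        all is_bulk M
      & sumn (map tlen R) = interval_card a b].

Definition Ncount (R : seq tile) : nat := count id (flatten (map content R)).

Definition is_Nmax (a b : int) (M : nat) : Prop :=
  (exists R, root_tiling a b R /\ Ncount R = M) /\
  (forall R, root_tiling a b R -> Ncount R <= M).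

(** Each bulk tile carries at most one particle per three sites, and the
    boundary tiles can beat this rate by at most one particle on the left
    (11000) and three on the right (011); this gives [3 N <= |Lambda| + 4].
    Monomers followed by a right 1- or 2-monomer reach [3 N >= |Lambda|].
    Every root tiling with [N > 0] can be turned into one with [N - 1] by
    replacing a single tile with bulk tiles of the same length, so all values
    below [N^max] are attained. *)
From mathcomp Require Import all_boot all_order all_algebra.
From mathcomp Require Import zify ring lra.
From Stdlib Require Import ClassicalEpsilon.
Import Order.TTheory GRing.Theory Num.Theory.
Set Implicit Arguments. Unset Strict Implicit.

Arguments tlen !t /.

Lemma bounded_nat_max (P : nat -> Prop) (B : nat) :
  (exists n, P n) -> (forall n, P n -> n <= B) ->
  exists m, P m /\ forall n, P n -> n <= m.
Proof.
move=> exP ubP.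
pose p n : bool := excluded_middle_informative (P n).
have pP n : reflect (P n) (p n) by rewrite /p; case: excluded_middle_informative; constructor.
have exp : exists n, p n by have [n /pP] := exP; exists n.
have ubp n : p n -> n <= B by move/pP/ubP.
case: (ex_maxnP exp ubp) => m /pP Pm max_m.
by exists m; split=> // k /pP /max_m.
Qed.

Definition seq_of_opt (o : option tile) : seq tile :=
  if o is Some t then [:: t] else [::].

Lemma Ncount_cat R1 R2 : Ncount (R1 ++ R2) = Ncount R1 + Ncount R2.
Proof. by rewrite /Ncount map_cat flatten_cat count_cat. Qed.

Lemma Ncount1 t : Ncount [:: t] = count id (content t).
Proof. by rewrite /Ncount /= cats0. Qed.

Lemma Ncount_cons t R : Ncount (t :: R) = count id (content t) + Ncount R.
Proof. by rewrite -cat1s Ncount_cat Ncount1. Qed.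

Lemma Ncount_nseq_Mono q : Ncount (nseq q Mono) = q.
Proof. by elim: q => //= q IH; rewrite Ncount_cons IH. Qed.

Lemma tlen_nseq_Mono q : sumn (map tlen (nseq q Mono)) = 3 * q.
Proof. by elim: q => //= q ->; rewrite mulnS. Qed.

Lemma root_tiling_no_left a b M r :
  all is_bulk M -> ((if r is Some t then is_right t else true) : Prop) ->
  sumn (map tlen (M ++ seq_of_opt r)) = interval_card a b ->
  root_tiling a b (M ++ seq_of_opt r).
Proof. by move=> hM hr hs; exists None, M, r; split=> //; left. Qed.

Lemma bulk_Ncount_le M : all is_bulk M -> 3 * Ncount M <= sumn (map tlen M).
Proof.
elim: M => //= t M IH /andP[bt /IH hM]; rewrite Ncount_cons.
by case: t bt => //= _; lia.
Qed.

Lemma root_tiling_Ncount_le a b R :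
  root_tiling a b R -> 3 * Ncount R <= interval_card a b + 4.
Proof.
case=> l [M [r [-> hl hr hM <-]]]; have := bulk_Ncount_le hM.
case: hl => ->; case: r hr => [[]|] //= _;
  by rewrite ?cats0 ?Ncount_cons ?Ncount_cat ?Ncount1 ?map_cat ?sumn_cat /=; lia.
Qed.

Lemma root_tiling_Ncount_ge a b :
  exists R, root_tiling a b R /\ interval_card a b <= 3 * Ncount R.
Proof.
set n := interval_card a b.
pose r := match n %% 3 with 0 => None | 1 => Some RMono1 | _ => Some RMono2 end.
have hn : n = 3 * (n %/ 3) + n %% 3 by rewrite mulnC -divn_eq.
have hr : n %% 3 < 3 by rewrite ltn_mod.
exists (nseq (n %/ 3) Mono ++ seq_of_opt r); split.
  apply: root_tiling_no_left; first by rewrite all_nseq orbT.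
    by rewrite /r; case: (n %% 3) => [|[|]].
  rewrite map_cat sumn_cat tlen_nseq_Mono /r.
  by move: hn hr; case: (n %% 3) => [|[|[|]]] //=; lia.
rewrite Ncount_cat Ncount_nseq_Mono /r.
by move: hn hr; case: (n %% 3) => [|[|[|]]] //=; rewrite ?Ncount1 /=; lia.
Qed.

Definition lower (t : tile) : seq tile :=
  match t with
  | Void => [:: Void]
  | Mono => [:: Void; Void; Void]
  | LDimer => [:: Mono; Void; Void]
  | RDimer => [:: Mono]
  | RMono1 => [:: Void]
  | RMono2 => [:: Void; Void]
  end.

Lemma all_bulk_lower t : all is_bulk (lower t).
Proof. by case: t. Qed.

Lemma tlen_lower t : sumn (map tlen (lower t)) = tlen t.
Proof. by case: t. Qed.

Lemma Ncount_lower t : Ncount (lower t) = (Ncount [:: t]).-1.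
Proof. by case: t. Qed.

Lemma bulk_Ncount_pred M : all is_bulk M -> 0 < Ncount M ->
  exists M', [/\ all is_bulk M', sumn (map tlen M') = sumn (map tlen M)
               & Ncount M' = (Ncount M).-1].
Proof.
elim: M => //= t M IH /andP[bt bM]; rewrite Ncount_cons.
case: t bt => //= _ hpos.
  have [M' [bM' hs hN]] := IH bM hpos.
  by exists (Void :: M'); rewrite /= Ncount_cons hs hN.
exists (lower Mono ++ M); rewrite all_cat bM Ncount_cat map_cat sumn_cat.
by rewrite tlen_lower Ncount_lower.
Qed.

Lemma root_tiling_Ncount_pred a b R : root_tiling a b R -> 0 < Ncount R ->
  exists R', root_tiling a b R' /\ Ncount R' = (Ncount R).-1.
Proof.
case=> l [M [r [-> hl hr hM hs]]] hpos.
rewrite -/(seq_of_opt r) in hs hpos *.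
case: hl hs hpos => -> hs hpos; last first.
  exists ((lower LDimer ++ M) ++ seq_of_opt r).
  split; first exact: root_tiling_no_left.
  by rewrite !Ncount_cat Ncount_lower !Ncount1 /=; lia.
case: r hr hs hpos => [t|] /= hr hs hpos.
  exists ((M ++ lower t) ++ seq_of_opt None); split.
    apply: root_tiling_no_left => //; first by rewrite all_cat hM all_bulk_lower.
    by rewrite -hs cats0 !map_cat !sumn_cat tlen_lower /= addn0.
  by rewrite cats0 !Ncount_cat Ncount_lower Ncount1; case: t hr {hs hpos} => //= _; lia.
rewrite cats0 in hs hpos *.
have [M' [bM' hs' hN]] := bulk_Ncount_pred hM hpos.
exists (M' ++ seq_of_opt None); split; last by rewrite cats0.
by apply: root_tiling_no_left => //; rewrite cats0 hs'.
Qed.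

Lemma root_tiling_Ncount_downward a b R N : root_tiling a b R -> N <= Ncount R ->
  exists R', root_tiling a b R' /\ Ncount R' = N.
Proof.
move=> hR hN; move hd: (Ncount R - N) => d.
elim: d R hR hN hd => [|d IH] R hR hN hd; first by exists R; split=> //; lia.
have [|R' [hR' eR']] := root_tiling_Ncount_pred hR; first by lia.
by apply: (IH R') => //; lia.
Qed.

Lemma Nmax_exists a b : exists M, is_Nmax a b M.
Proof.
pose P N := exists R, root_tiling a b R /\ Ncount R = N.
have exP : exists N, P N.
  by have [R [hR _]] := root_tiling_Ncount_ge a b; exists (Ncount R), R.
have ubP N : P N -> N <= interval_card a b + 4.
  by move=> [R [/root_tiling_Ncount_le hR <-]]; lia.
have [M [PM maxM]] := bounded_nat_max exP ubP.
by exists M; split=> // R hR; apply: maxM; exists R.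
Qed.

Lemma Nmax_bounds a b M : is_Nmax a b M ->
  interval_card a b <= 3 * M <= interval_card a b + 4.
Proof.
case=> [[R [hR <-]] maxM]; rewrite root_tiling_Ncount_le // andbT.
have [R' [hR' ge3]] := root_tiling_Ncount_ge a b.
by have := maxM _ hR'; lia.
Qed.

Section Ratios.
Local Open Scope ring_scope.

Lemma ratio_bounds (F : realFieldType) (M n : nat) :
  (0 < n)%N -> (n <= 3 * M <= n + 4)%N ->
  1 / 3 <= (M%:R : F) / n%:R <= 1 / 3 + 4 / (3 * n%:R).
Proof.
move=> n_gt0 /andP[lo hi].
have n0 : (0 : F) < n%:R by rewrite ltr0n.
have -> : M%:R / n%:R = 1 / 3 + (3 * M%:R - n%:R) / (3 * n%:R) :> F.
  by field; rewrite gt_eqF.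
rewrite lerDl lerD2l ler_pM2r ?invr_gt0 ?mulr_gt0 //.
move: lo hi; rewrite -!(ler_nat F) natrD !natrM => lo hi.
by rewrite divr_ge0 ?mulr_ge0 ?ler0n ?subr_ge0 //=; lra.
Qed.

Lemma eventually_div_natr_lt (F : archiRealFieldType) (c eps : F) :
  0 < eps -> exists K, forall n, (K <= n)%N -> c / n%:R < eps.
Proof.
move=> eps0; exists (Num.Def.archi_bound (`|c| / eps)) => n hn.
have c_ge0 : 0 <= `|c| / eps by rewrite divr_ge0 // ltW.
have lt_n : `|c| / eps < n%:R.
  by apply: lt_le_trans (archi_boundP c_ge0) _; rewrite ler_nat.
have n0 : 0 < n%:R :> F by apply: le_lt_trans lt_n.
rewrite ltr_pdivrMr // in lt_n.
apply: le_lt_trans (ler_norm _) _.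
by rewrite normrM normfV normr_nat ltr_pdivrMr // mulrC.
Qed.

End Ratios.

Theorem lemma2p5 :
  (forall (a b : int), (a <= b)%R ->
     (* N^max_Lambda exists (the maximum is attained) *)
     (exists M : nat, is_Nmax a b M) /\
     forall M : nat, is_Nmax a b M ->
       (forall N : nat, N <= M -> exists R, root_tiling a b R /\ Ncount R = N) /\
       ((1 / 3 : rat) <= (M%:R : rat) / (interval_card a b)%:R <=
          1 / 3 + 4 / (3 * (interval_card a b)%:R))%R) /\
  (* lim_{|Lambda| -> oo} N^max_Lambda / |Lambda| = 1/3 *)
  (forall eps : rat, (0 < eps)%R ->
     exists K : nat, forall (a b : int) (M : nat),
       (a <= b)%R -> K <= interval_card a b -> is_Nmax a b M ->
       (`|(M%:R : rat) / (interval_card a b)%:R - 1 / 3| < eps)%R).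
Proof.
split.
  (* [interval_card a b] counts [|b - a| + 1] sites. *)
  move=> a b _; split; first exact: Nmax_exists.
  move=> M hM; split.
    by case: hM => [[R [hR <-]] _] N; apply: root_tiling_Ncount_downward.
  exact: ratio_bounds (Nmax_bounds hM).
move=> eps eps0; have [K HK] := eventually_div_natr_lt (4 / 3 : rat) eps0.
exists K => a b M _ hK hM.
have /andP[lo hi] := ratio_bounds rat (isT : 0 < interval_card a b) (Nmax_bounds hM).
have := HK _ hK; rewrite -mulrA -invfM => small.
by rewrite ger0_norm ?subr_ge0 //; lra.
Qed.
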